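(* Fix the following data: - a power vector $\bm{p}\in\mathbb{R}^n_{>0}$ and a demand vector $\bm{d}\in\mathbb{R}^m_{>0}$; - an association $\kappa$ in which every UE is served by at least one cell and every cell serves at least one UE; - a UE $u$ and a cell $c\notin\mathcal{I}_u$. Let $\tilde{\bm{x}}\in\mathbb{R}^n_{\ge0}$ satisfy $\tilde{\bm{x}}=\bm{f}(\bm{h}(\tilde{\bm{x}}))$, and let $\bm{x}\in\mathbb{R}^n_{\ge0}$ satisfy $\bm{x}=\bm{f}^+(\bm{h}^+(\bm{x}))$. Define the iteration $\bm{x}^{(0)}=\tilde{\bm{x}}$ and $\bm{x}^{(k)}=\bm{f}(\bm{h}^+(\bm{x}^{(k-1)}))$ for $k\ge1$. If there exists $k\ge1$ with $f^+_c(\bm{h}^+(\bm{x}^{(k)}))\le x^{(k)}_c$, then $\bm{x}\le\tilde{\bm{x}}$, that is, $x_i\le\tilde{x}_i$ for all $i\in\mathcal{I}$ and $\bm{x}\ne\tilde{\bm{x}}$.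
   Context: Cellular network model. $\mathcal{I}$ is a set of $n$ cells and $\mathcal{J}$ a set of $m$ UEs. The association $\kappa\in\{0,1\}^{n\times m}$ gives $\mathcal{I}_j=\{i:\kappa_{ij}=1\}$ and $\mathcal{J}_i=\{j:\kappa_{ij}=1\}$. $M,B>0$ are constants, $\sigma^2>0$ is the noise power and $g_{ij}>0$ are the channel gains. With $\bm{p},\bm{d}$ fixed, define for $\bm{x}\in\mathbb{R}^n_{\ge0}$ and $\bm{\gamma}\in\mathbb{R}^m_{>0}$ the maps before adding the link: - $h_j(\bm{x})=\dfrac{\sum_{i\in\mathcal{I}_j}p_ig_{ij}}{\sum_{k\in\mathcal{I}\setminus\mathcal{I}_j}p_kg_{kj}x_k+\sigma^2}$; - $f_i(\bm{\gamma})=\sum_{j\in\mathcal{J}_i}\dfrac{d_j}{MB\log_2(1+\gamma_j)}$. The maps after letting cell $c$ additionally serve UE $u$ are: - $h^+_u(\bm{x})=\dfrac{\sum_{i\in\mathcal{I}_u\cup\{c\}}p_ig_{iu}}{\sum_{k\in\mathcal{I}\setminus(\mathcal{I}_u\cup\{c\})}p_kg_{ku}x_k+\sigma^2}$, and $h^+_j=h_j$ for $j\ne u$; - $f^+_c(\bm{\gamma})=\sum_{j\in\mathcal{J}_c\cup\{u\}}\dfrac{d_j}{MB\log_2(1+\gamma_j)}$, and $f^+_i=f_i$ for $i\ne c$. Vectors are $\bm{h}=(h_j)_j$, $\bm{f}=(f_i)_i$, and similarly for $\bm{h}^+$ and $\bm{f}^+$. It is known, and assumed here, that $\bm{f}\circ\bm{h}$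 and $\bm{f}^+\circ\bm{h}^+$ are standard interference functions, each with a unique fixed point. The vector inequality $\bm{x}\le\tilde{\bm{x}}$ means componentwise $\le$ with strict inequality in at least one component. *)

From HB Require Import structures.
From mathcomp Require Import all_boot all_order all_algebra.
From mathcomp Require Import reals exp.
Set Implicit Arguments. Unset Strict Implicit. Unset Printing Implicit Defensive.
Import Order.TTheory GRing.Theory Num.Theory.
Local Open Scope ring_scope.

(* Vectors over R indexed by cells 'I_n or UEs 'I_m are functions. *)

Definition log2 (R : realType) (x : R) : R := ln x / ln 2.

Definition kappa_add (n m : nat) (kappa : 'I_n -> 'I_m -> bool)
  (c : 'I_n) (u : 'I_m) : 'I_n -> 'I_m -> bool :=
  fun i j => kappa i j || ((i == c) && (j == u)).

Definition hmap (R : realType) (n m : nat) (kappa : 'I_n -> 'I_m -> bool)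
  (p : 'I_n -> R) (g : 'I_n -> 'I_m -> R) (sigma2 : R)
  (x : 'I_n -> R) : 'I_m -> R :=
  fun j => (\sum_(i | kappa i j) p i * g i j) /
           (\sum_(k | ~~ kappa k j) p k * g k j * x k + sigma2).

Definition fmap (R : realType) (n m : nat) (kappa : 'I_n -> 'I_m -> bool)
  (d : 'I_m -> R) (M B : R) (gamma : 'I_m -> R) : 'I_n -> R :=
  fun i => \sum_(j | kappa i j) d j / (M * B * log2 (1 + gamma j)).

Definition nonneg (R : realType) (I : Type) (x : I -> R) : Prop :=
  forall i, 0 <= x i.

Definition vle (R : realType) (I : Type) (x y : I -> R) : Prop :=
  forall i, x i <= y i.

Definition vlt_some (R : realType) (I : Type) (x y : I -> R) : Prop :=
  (forall i, x i <= y i) /\ (exists i, x i < y i).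

Definition standard_interference (R : realType) (n : nat)
  (T : ('I_n -> R) -> ('I_n -> R)) : Prop :=
  [/\ (forall x, nonneg x -> forall i, 0 < T x i),
      (forall x y, nonneg x -> vle x y -> vle (T x) (T y)) &
      (forall x (a : R), nonneg x -> 1 < a ->
         forall i, T (fun k => a * x k) i < a * T x i)].

Definition unique_fixed_point (R : realType) (n : nat)
  (T : ('I_n -> R) -> ('I_n -> R)) : Prop :=
  exists x, [/\ nonneg x, T x = x &
               forall y, nonneg y -> T y = y -> y = x].

From mathcomp Require Import all_boot all_order all_algebra.
From mathcomp Require Import reals exp.
Set Implicit Arguments. Unset Strict Implicit. Unset Printing Implicit Defensive.
Import Order.TTheory GRing.Theory Num.Theory.
Local Open Scope ring_scope.

(* Let S := f o h+.  Adding the link (c, u) only raises SINRs, and loads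
   decrease with SINR, so S x~ <= x~, strictly at any cell serving u; as S is
   monotone, the iterates x^(k) = S^k x~ decrease.  Since f+ agrees with f
   outside cell c, the hypothesis at c makes x^(k) feasible for f+ o h+,
   i.e. f+(h+(x^(k))) <= x^(k).  The fixed point of a standard interference
   function lies below every feasible point, whence x <= x^(k) <= S x~ < x~ at
   that cell. *)

Section StandardInterference.
Variables (R : realType) (n : nat) (T : ('I_n -> R) -> 'I_n -> R).
Hypothesis T_si : standard_interference T.

(* Scale z by the largest ratio a = x_i / z_i; if a > 1, then
   x_i = T(x)_i <= T(a z)_i < a T(z)_i <= a z_i = x_i. *)
Lemma standard_interference_fixpoint_le x z :
  nonneg x -> T x = x -> nonneg z -> vle (T z) z -> vle x z.
Proof.
case: T_si => T_gt0 T_mono T_scal x_ge0 Tx z_ge0 Tz_le i.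
have z_gt0 j : 0 < z j by exact: lt_le_trans (T_gt0 _ z_ge0 j) (Tz_le j).
case: (arg_maxP (fun j => x j / z j) (erefl : xpredT i)) => im _ ratio_max.
have [ratio_le1|ratio_gt1] := leP (x im / z im) 1.
  by have := le_trans (ratio_max i isT) ratio_le1; rewrite ler_pdivrMr // mul1r.
set a := x im / z im in ratio_gt1 ratio_max.
have x_le_az : vle x (fun k => a * z k).
  by move=> j; rewrite -ler_pdivrMr //; apply: ratio_max.
have a_gt0 : 0 < a by exact: lt_trans ltr01 ratio_gt1.
have : x im < x im.
  rewrite -{1}Tx; apply: le_lt_trans (T_mono _ _ x_ge0 x_le_az im) _.
  apply: lt_le_trans (T_scal _ _ z_ge0 ratio_gt1 im) _.
  have x_im : x im = a * z im by rewrite /a divfK ?lt0r_neq0.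
  by rewrite [leRHS]x_im ler_pM2l // Tz_le.
by rewrite ltxx.
Qed.

End StandardInterference.

Section MonotoneIteration.
Variables (R : realType) (I : Type) (S : (I -> R) -> I -> R).
Hypotheses (S_nonneg : forall y, nonneg y -> nonneg (S y))
  (S_mono : forall y y', nonneg y -> vle y y' -> vle (S y) (S y')).
Variable z : I -> R.
Hypotheses (z_ge0 : nonneg z) (Sz_le : vle (S z) z).

Lemma iter_nonneg k : nonneg (iter k S z).
Proof. by elim: k => [|k IH] //=; apply: S_nonneg. Qed.

Lemma iter_le_prev k : vle (iter k.+1 S z) (iter k S z).
Proof.
elim: k => [|k IH]; first exact: Sz_le.
exact: S_mono (iter_nonneg k.+1) IH.
Qed.

Lemma iter_antitone k l : (l <= k)%N -> vle (iter k S z) (iter l S z).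
Proof.
move=> /subnK <-; elim: (k - l)%N => [|j IH] i //.
by rewrite addSn; apply: le_trans (iter_le_prev _ i) (IH i).
Qed.

End MonotoneIteration.

Section Log2.
Variable R : realType.

Lemma log2_gt0 (x : R) : 1 < x -> 0 < log2 x.
Proof. by move=> x_gt1; rewrite /log2 divr_gt0 ?ln_gt0 ?ltr1n. Qed.

Lemma ltr_log2 : {in Num.pos &, {mono @log2 R : x y / x < y}}.
Proof.
by move=> x y x_gt0 y_gt0; rewrite /log2 ltr_pM2r ?invr_gt0 ?ln_gt0 ?ltr1n ?ltr_ln.
Qed.

Lemma ler_log2 : {in Num.pos &, {mono @log2 R : x y / x <= y}}.
Proof.
by move=> x y x_gt0 y_gt0; rewrite /log2 ler_pM2r ?invr_gt0 ?ln_gt0 ?ltr1n ?ler_ln.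
Qed.

End Log2.

Section Load.
Variables (R : realType) (n m : nat) (M B : R) (d : 'I_m -> R).
Hypotheses (M_gt0 : 0 < M) (B_gt0 : 0 < B) (d_gt0 : forall j, 0 < d j).

Lemma rate_gt0 (gam : R) : 0 < gam -> 0 < M * B * log2 (1 + gam).
Proof.
move=> gam_gt0; apply: mulr_gt0; first exact: mulr_gt0.
by apply: log2_gt0; rewrite ltrDl.
Qed.

Lemma load_term_le j (gam gam' : R) : 0 < gam -> gam <= gam' ->
  d j / (M * B * log2 (1 + gam')) <= d j / (M * B * log2 (1 + gam)).
Proof.
move=> gam_gt0 le_gam; have gam'_gt0 := lt_le_trans gam_gt0 le_gam.
rewrite ler_pM2l // lef_pV2 ?posrE ?rate_gt0 // ler_pM2l ?mulr_gt0 //.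
by rewrite ler_log2 ?posrE ?addr_gt0 // lerD2l.
Qed.

Lemma load_term_lt j (gam gam' : R) : 0 < gam -> gam < gam' ->
  d j / (M * B * log2 (1 + gam')) < d j / (M * B * log2 (1 + gam)).
Proof.
move=> gam_gt0 lt_gam; have gam'_gt0 := lt_trans gam_gt0 lt_gam.
rewrite ltr_pM2l // ltf_pV2 ?posrE ?rate_gt0 // ltr_pM2l ?mulr_gt0 //.
by rewrite ltr_log2 ?posrE ?addr_gt0 // ltrD2l.
Qed.

Variable K : 'I_n -> 'I_m -> bool.

Lemma fmap_ge0 (gam : 'I_m -> R) : (forall j, 0 < gam j) -> nonneg (fmap K d M B gam).
Proof.
by move=> gam_gt0 i; apply: sumr_ge0 => j _; apply/ltW/divr_gt0; last exact: rate_gt0.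
Qed.

Lemma fmap_antitone (gam gam' : 'I_m -> R) : (forall j, 0 < gam j) ->
  vle gam gam' -> vle (fmap K d M B gam') (fmap K d M B gam).
Proof. by move=> gam_gt0 le_gam i; apply: ler_sum => j _; apply: load_term_le. Qed.

Lemma fmap_lt (gam gam' : 'I_m -> R) i j0 : (forall j, 0 < gam j) ->
  vle gam gam' -> K i j0 -> gam j0 < gam' j0 ->
  fmap K d M B gam' i < fmap K d M B gam i.
Proof.
move=> gam_gt0 le_gam Kij0 lt_gam0; rewrite /fmap (bigD1 j0) // [ltRHS](bigD1 j0) //=.
by apply: ltr_leD; [apply: load_term_lt | apply: ler_sum => j _; apply: load_term_le].
Qed.

End Load.

Section Sinr.
Variables (R : realType) (n m : nat) (sigma2 : R).
Variables (g : 'I_n -> 'I_m -> R) (p : 'I_n -> R) (K : 'I_n -> 'I_m -> bool).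
Hypotheses (sigma2_gt0 : 0 < sigma2) (g_gt0 : forall i j, 0 < g i j)
  (p_gt0 : forall i, 0 < p i).

Lemma signal_gt0 j : (exists i, K i j) -> 0 < \sum_(i | K i j) p i * g i j.
Proof.
case=> i Kij; rewrite (bigD1 i) //= ltr_wpDr ?mulr_gt0 //.
by apply: sumr_ge0 => k _; rewrite ltW ?mulr_gt0.
Qed.

Lemma interference_noise_gt0 (y : 'I_n -> R) j : nonneg y ->
  0 < \sum_(k | ~~ K k j) p k * g k j * y k + sigma2.
Proof.
move=> y_ge0; apply: ltr_wpDl => //; apply: sumr_ge0 => k _.
by rewrite mulr_ge0 // mulr_ge0 // ltW.
Qed.

Lemma hmap_gt0 (y : 'I_n -> R) j : nonneg y -> (exists i, K i j) ->
  0 < hmap K p g sigma2 y j.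
Proof. by move=> y_ge0 Kj; rewrite divr_gt0 ?signal_gt0 ?interference_noise_gt0. Qed.

Lemma hmap_antitone (y y' : 'I_n -> R) : nonneg y -> vle y y' ->
  (forall j, exists i, K i j) -> vle (hmap K p g sigma2 y') (hmap K p g sigma2 y).
Proof.
move=> y_ge0 le_y served j; have y'_ge0 k := le_trans (y_ge0 k) (le_y k).
rewrite ler_pM2l ?signal_gt0 // lef_pV2 ?posrE ?interference_noise_gt0 // lerD2r.
by apply: ler_sum => k _; rewrite ler_pM2l ?mulr_gt0.
Qed.

End Sinr.

Section AddLink.
Variables (R : realType) (n m : nat) (kappa : 'I_n -> 'I_m -> bool).
Variables (c : 'I_n) (u : 'I_m).
Hypothesis c_not_serving_u : ~~ kappa c u.

Local Notation kappa' := (kappa_add kappa c u).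

Lemma kappa_add_neq_ue i j : j != u -> kappa' i j = kappa i j.
Proof. by move=> /negbTE ju; rewrite /kappa_add ju andbF orbF. Qed.

Lemma kappa_add_neq_cell i j : i != c -> kappa' i j = kappa i j.
Proof. by move=> /negbTE ic; rewrite /kappa_add ic orbF. Qed.

Lemma sum_kappa_add_ue (F : 'I_n -> R) :
  \sum_(i | kappa' i u) F i = F c + \sum_(i | kappa i u) F i.
Proof.
rewrite (bigD1 c) /kappa_add ?eqxx ?orbT //=; congr (_ + _); apply: eq_bigl => i.
by case: eqVneq => [->|]; rewrite ?(negbTE c_not_serving_u) ?orbF ?andbT.
Qed.

Lemma sum_not_kappa_ue (F : 'I_n -> R) :
  \sum_(i | ~~ kappa i u) F i = F c + \sum_(i | ~~ kappa' i u) F i.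
Proof.
rewrite (bigD1 c) //=; congr (_ + _); apply: eq_bigl => i.
by rewrite /kappa_add eqxx andbT negb_or.
Qed.

Variables (sigma2 : R) (g : 'I_n -> 'I_m -> R) (p : 'I_n -> R).
Hypotheses (sigma2_gt0 : 0 < sigma2) (g_gt0 : forall i j, 0 < g i j)
  (p_gt0 : forall i, 0 < p i).

Lemma hmap_add_neq_ue (y : 'I_n -> R) j : j != u ->
  hmap kappa' p g sigma2 y j = hmap kappa p g sigma2 y j.
Proof.
by move=> ju; congr (_ / (_ + _)); apply: eq_bigl => i; rewrite kappa_add_neq_ue.
Qed.

(* The new link moves p_c g_cu from the interference to the signal. *)
Lemma hmap_add_lt_ue (y : 'I_n -> R) : nonneg y -> (exists i, kappa i u) ->
  hmap kappa p g sigma2 y u < hmap kappa' p g sigma2 y u.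
Proof.
move=> y_ge0 served_u; rewrite /hmap sum_kappa_add_ue sum_not_kappa_ue -addrA.
set N := \sum_(i | kappa i u) _; set D := \sum_(k | ~~ kappa' k u) _ + sigma2.
have N_gt0 : 0 < N by exact: signal_gt0.
have D_gt0 : 0 < D by exact: interference_noise_gt0.
have c_intf_ge0 : 0 <= p c * g c u * y c by rewrite mulr_ge0 // ltW ?mulr_gt0.
apply: le_lt_trans (_ : N / D < _).
  have D'_gt0 := ltr_wpDl c_intf_ge0 D_gt0.
  by rewrite ler_pM2l // lef_pV2 ?posrE // lerDr.
by rewrite ltr_pM2r ?invr_gt0 // ltrDr mulr_gt0.
Qed.

Lemma hmap_add_ge (y : 'I_n -> R) : nonneg y -> (exists i, kappa i u) ->
  vle (hmap kappa p g sigma2 y) (hmap kappa' p g sigma2 y).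
Proof.
move=> y_ge0 served_u j; have [->|ju] := eqVneq j u.
  exact/ltW/hmap_add_lt_ue.
by rewrite hmap_add_neq_ue.
Qed.

Lemma fmap_add_neq_cell d M B (gam : 'I_m -> R) i : i != c ->
  fmap kappa' d M B gam i = fmap kappa d M B gam i.
Proof. by move=> ic; apply: eq_bigl => j; rewrite kappa_add_neq_cell. Qed.

End AddLink.

Section AddLinkIteration.
Variables (R : realType) (n m : nat) (M B sigma2 : R).
Variables (g : 'I_n -> 'I_m -> R) (p : 'I_n -> R) (d : 'I_m -> R).
Variables (kappa : 'I_n -> 'I_m -> bool) (c : 'I_n) (u : 'I_m).
Hypotheses (M_gt0 : 0 < M) (B_gt0 : 0 < B) (sigma2_gt0 : 0 < sigma2)
  (g_gt0 : forall i j, 0 < g i j) (p_gt0 : forall i, 0 < p i)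
  (d_gt0 : forall j, 0 < d j).
Hypotheses (served : forall j, exists i, kappa i j)
  (c_not_serving_u : ~~ kappa c u).

Local Notation kappa' := (kappa_add kappa c u).
Local Notation h := (hmap kappa p g sigma2).
Local Notation hplus := (hmap kappa' p g sigma2).
Local Notation f := (fmap kappa d M B).
Local Notation fplus := (fmap kappa' d M B).

Lemma kappa_add_served j : exists i, kappa' i j.
Proof. by have [i kij] := served j; exists i; rewrite /kappa_add kij. Qed.

Lemma hmap_add_gt0 (y : 'I_n -> R) j : nonneg y -> 0 < hplus y j.
Proof. by move=> y_ge0; apply: hmap_gt0; last exact: kappa_add_served. Qed.

Lemma fmap_hmap_add_nonneg (y : 'I_n -> R) : nonneg y -> nonneg (f (hplus y)).
Proof. by move=> y_ge0; apply: fmap_ge0 => // j; apply: hmap_add_gt0. Qed.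

Lemma fmap_hmap_add_monotone (y y' : 'I_n -> R) : nonneg y -> vle y y' ->
  vle (f (hplus y)) (f (hplus y')).
Proof.
move=> y_ge0 le_y; apply: fmap_antitone => //.
  by move=> j; apply: hmap_add_gt0 => k; apply: le_trans (y_ge0 k) (le_y k).
by apply: hmap_antitone => //; apply: kappa_add_served.
Qed.

Variable xt : 'I_n -> R.
Hypotheses (xt_ge0 : nonneg xt) (xt_fix : xt = f (h xt)).

Lemma fmap_hmap_add_le_fixpoint : vle (f (hplus xt)) xt.
Proof.
move=> i; rewrite {2}xt_fix; apply: fmap_antitone => //.
  by move=> j; apply: hmap_gt0.
exact: hmap_add_ge.
Qed.

Lemma fmap_hmap_add_lt_fixpoint i : kappa i u -> f (hplus xt) i < xt i.
Proof.
move=> kiu; rewrite {2}xt_fix; apply: (fmap_lt M_gt0 B_gt0 d_gt0 _ _ kiu).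
- by move=> j; apply: hmap_gt0.
- exact: hmap_add_ge.
- exact: hmap_add_lt_ue.
Qed.

(* Off cell c, f+ o h+ coincides with f o h+, so only cell c needs checking. *)
Lemma iterate_feasible k (xk := iter k (fun y => f (hplus y)) xt) :
  fplus (hplus xk) c <= xk c -> vle (fplus (hplus xk)) xk.
Proof.
move=> at_c i; have [->|ic] := eqVneq i c; first exact: at_c.
rewrite fmap_add_neq_cell //; apply: (iter_le_prev _ _ xt_ge0).
- exact: fmap_hmap_add_nonneg.
- exact: fmap_hmap_add_monotone.
- exact: fmap_hmap_add_le_fixpoint.
Qed.

End AddLinkIteration.

Theorem theorem2 (R : realType) (n m : nat)
  (M B sigma2 : R) (g : 'I_n -> 'I_m -> R)
  (p : 'I_n -> R) (d : 'I_m -> R)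
  (kappa : 'I_n -> 'I_m -> bool) (u : 'I_m) (c : 'I_n)
  (xt x : 'I_n -> R) :
  0 < M -> 0 < B -> 0 < sigma2 ->
  (forall i j, 0 < g i j) ->
  (forall i, 0 < p i) -> (forall j, 0 < d j) ->
  (forall j, exists i, kappa i j) ->
  (forall i, exists j, kappa i j) ->
  ~~ kappa c u ->
  (* standing assumption: f o h and f+ o h+ are standard interference
     functions, each with a unique fixed point *)
  standard_interference
    (fun y => fmap kappa d M B (hmap kappa p g sigma2 y)) ->
  unique_fixed_point
    (fun y => fmap kappa d M B (hmap kappa p g sigma2 y)) ->
  standard_interference
    (fun y => fmap (kappa_add kappa c u) d M B
                   (hmap (kappa_add kappa c u) p g sigma2 y)) ->
  unique_fixed_point
    (fun y => fmap (kappa_add kappa c u) d M B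
                   (hmap (kappa_add kappa c u) p g sigma2 y)) ->
  nonneg xt -> xt = fmap kappa d M B (hmap kappa p g sigma2 xt) ->
  nonneg x ->
  x = fmap (kappa_add kappa c u) d M B (hmap (kappa_add kappa c u) p g sigma2 x) ->
  (exists k : nat, (1 <= k)%N /\
     let xk := iter k (fun y => fmap kappa d M B
                         (hmap (kappa_add kappa c u) p g sigma2 y)) xt in
     fmap (kappa_add kappa c u) d M B (hmap (kappa_add kappa c u) p g sigma2 xk) c
       <= xk c) ->
  vlt_some x xt.
Proof.
move=> M_gt0 B_gt0 sigma2_gt0 g_gt0 p_gt0 d_gt0 served _ c_not_serving_u _ _.
move=> plus_si _ xt_ge0 xt_fix x_ge0 x_fix [k [k_ge1 at_c]].
set S := fun y => fmap kappa d M B (hmap (kappa_add kappa c u) p g sigma2 y) in at_c.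
have S_nonneg y : nonneg y -> nonneg (S y) by apply: fmap_hmap_add_nonneg.
have S_mono y y' : nonneg y -> vle y y' -> vle (S y) (S y').
  by apply: fmap_hmap_add_monotone.
have S_le : vle (S xt) xt by apply: fmap_hmap_add_le_fixpoint.
have xk_le := iter_antitone S_nonneg S_mono xt_ge0 S_le.
have x_le_xk : vle x (iter k S xt).
  apply: (standard_interference_fixpoint_le plus_si x_ge0 (esym x_fix)).
    exact: iter_nonneg.
  by apply: iterate_feasible.
split=> [i|]; first exact: le_trans (x_le_xk i) (xk_le k 0%N isT i).
have [i0 i0_serves_u] := served u; exists i0.
apply: le_lt_trans (x_le_xk i0) (le_lt_trans (xk_le k 1%N k_ge1 i0) _).
by apply: fmap_hmap_add_lt_fixpoint.
Qed.
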